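(* Let $F=\breve F(\alpha_1,\dots,\alpha_t)$ be a fence, $i\in[t]$ and $j,k\in[\beta_i]$. If $S_i$ does not have a valley, then $k\hat\chi_{(i,j)}-j\hat\chi_{(i,k)}\equiv k-j$. If $S_i$ does not have a peak, then $(\alpha_i-k)\hat\chi_{(i,j)}-(\alpha_i-j)\hat\chi_{(i,k)}\equiv 0$.
   Context: Fences: let $\alpha=(\alpha_1,\dots,\alpha_t)$ be positive integers with $t\ge2$ and $\alpha_1,\alpha_t\ge2$. Put $a_0=0$, $a_i=\alpha_1+\dots+\alpha_i$, $n=a_t-1$. The fence $\breve F(\alpha)$ is the poset on $\{x_1,\dots,x_n\}$ whose cover relations are: for $1\le j\le n-1$ with $a_{i-1}\le j<a_i$, $x_j\lessdot x_{j+1}$ if $i$ is odd and $x_j\gtrdot x_{j+1}$ if $i$ is even. Segments: $S_1=\{x_j:1\le j\le a_1\}$, $S_i=\{x_j:a_{i-1}\le j\le a_i\}$ for $2\le i\le t-1$, $S_t=\{x_j:a_{t-1}\le j\le n\}$. Shared elements $x_{a_i}$ ($i\in[t-1]$) are peaks (cover two elements) or valleys (covered by two elements); a segment has a peak/valley if it contains one. $\breve S_i$ is the set of non-shared elements of $S_i$, $\beta_i=\alpha_i-1=\#\breve S_i$, $s_{(i,j)}$ is the $j$-th smallest element of $\breve S_i$, and $\hat\chi_{(i,j)}(I)=1$ if $s_{(i,j)}\in I$, else $0$, for order ideals $I\in\mathcal J(F)$. $T_q(I)=1$ if $q\in\min(F\setminus I)$, $-1$ if $q\in\max(I)$, $0$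 otherwise. $f\equiv g$ means $f-g=\sum_{q\in F}c_qT_q$ for real constants $c_q$; a real number denotes the constant function. *)

From HB Require Import structures.
From mathcomp Require Import all_boot all_order all_algebra.
From mathcomp Require Import Rstruct.
From Stdlib Require Rdefinitions.
Notation R := Rdefinitions.R.
Unset Printing Implicit Defensive.
Import Order.TTheory GRing.Theory Num.Theory.

Section Fence.
Variable alpha : seq nat.

(* t = number of parts, alpha_i (1-based), a_i = alpha_1 + ... + alpha_i *)
Definition ft : nat := size alpha.
Definition falpha (i : nat) : nat := nth 0 alpha i.-1.
Definition fa (i : nat) : nat := sumn (take i alpha).
Definition fbeta (i : nat) : nat := (falpha i).-1.
Definition fn : nat := (fa ft).-1.

(* Element x_j (1 <= j <= n) is represented by p : 'I_fn with j = p.+1. *)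
Definition pos (p : 'I_fn) : nat := p.+1.

Definition seg_parity (j : nat) (b : bool) : bool :=
  has (fun i => (fa i.-1 <= j < fa i) && (odd i == b)) (iota 1 ft).

(* cover relation: fcover x y  <->  x is covered by y (x ⋖ y) *)
Definition fcover : rel 'I_fn := fun x y =>
  ((pos y == (pos x).+1) && seg_parity (pos x) true)      (* x_j ⋖ x_{j+1}, i odd *)
  || ((pos x == (pos y).+1) && seg_parity (pos y) false). (* x_j ⋗ x_{j+1}, i even *)

Definition fle : rel 'I_fn := connect fcover.
Definition flt : rel 'I_fn := fun x y => (x != y) && fle x y.

Definition is_ideal (I : {set 'I_fn}) : bool :=
  [forall x, forall y, fle x y ==> (y \in I) ==> (x \in I)].

Definition in_min_compl (I : {set 'I_fn}) (q : 'I_fn) : bool :=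
  (q \notin I) && [forall y, flt y q ==> (y \in I)].
Definition in_max (I : {set 'I_fn}) (q : 'I_fn) : bool :=
  (q \in I) && [forall y, flt q y ==> (y \notin I)].
Definition toggle (q : 'I_fn) (I : {set 'I_fn}) : R :=
  if in_min_compl I q then 1%R else if in_max I q then (-1)%R else 0%R.

Definition tequiv (f g : {set 'I_fn} -> R) : Prop :=
  exists c : 'I_fn -> R, forall I, is_ideal I ->
    (f I - g I)%R = \big[+%R/0%R]_(q : 'I_fn) (c q * toggle q I)%R.

Definition is_shared (x : 'I_fn) : bool :=
  has (fun m => pos x == fa m) (iota 1 ft.-1).
Definition is_peak (x : 'I_fn) : bool :=
  is_shared x && (#|[set y | fcover y x]| == 2).
Definition is_valley (x : 'I_fn) : bool :=
  is_shared x && (#|[set y | fcover x y]| == 2).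

Definition segment (i : nat) : {set 'I_fn} :=
  [set x | if i == 1 then pos x <= fa 1
           else if i == ft then fa ft.-1 <= pos x
           else fa i.-1 <= pos x <= fa i].
Definition has_peak (i : nat) : bool := [exists x in segment i, is_peak x].
Definition has_valley (i : nat) : bool := [exists x in segment i, is_valley x].

Definition breveS (i : nat) : {set 'I_fn} := segment i :\: [set x | is_shared x].

Definition hchi (i j : nat) (I : {set 'I_fn}) : R :=
  match [pick q in breveS i | #|[set y in breveS i | flt y q]| == j.-1] with
  | Some q => if q \in I then 1%R else 0%R
  | None => 0%R
  end.

End Fence.

From Pilot Require Import Defs.
From mathcomp Require Import all_boot all_algebra.
From mathcomp Require Import Rstruct.
From mathcomp Require Import zify ring.
Import GRing.Theory.

(* A segment without a valley (resp. peak) is never interior, since every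
   interior segment contains both a peak and a valley.  So it is the first or the
   last segment, and its non-shared elements form a chain attached at one end to a
   virtual element x_0 or x_{n+1} lying below (resp. above) it.  For the m-th
   element of that chain, counted from the virtual end, the toggle is the second
   difference X_{m-1} - 2 X_m + X_{m+1} of the indicators X_m of the chain, the
   virtual element contributing the constant X_0 = 1 (resp. 0).  Hence modulo
   toggles m |-> X_m is affine, i.e. k X_j - j X_k == (k - j) X_0.  Without a
   valley s_(i,j) is X_j; without a peak the virtual element is the top one, so
   s_(i,j) is X_(alpha_i - j), whence the coefficients alpha_i - k. *)

Section ConnectSteps.
Context {T : finType} {e : rel T}.

Lemma connect_invariant (P : pred T) {x y} :
  connect e x y -> (forall u v, e u v -> P u -> P v) -> P x -> P y.
Proof.
move=> /connectP[p xp ->] eP; elim: p x xp => [|z p IHp] x //= /andP[exz zp] Px.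
exact: IHp zp (eP _ _ exz Px).
Qed.

Lemma connect_last_step {x y} :
  x != y -> connect e x y -> exists2 z, connect e x z & e z y.
Proof.
move=> neq /connectP[p]; case/lastP: p => [_ /= yx|p z]; first by rewrite yx eqxx in neq.
rewrite rcons_path last_rcons => /andP[xp pz] ->.
by exists (last x p) => //; apply/connectP; exists p.
Qed.

Lemma connect_first_step {x y} :
  x != y -> connect e x y -> exists2 z, e x z & connect e z y.
Proof.
move=> neq /connectP[[_ /= yx|z p]]; first by rewrite yx eqxx in neq.
by case/andP=> xz zp yz; exists z => //; apply/connectP; exists p.
Qed.

End ConnectSteps.

Lemma toggle_bool (R : comNzRingType) (l m u : bool) : m ==> l -> u ==> m ->
  (if ~~ m && l then 1 else if m && ~~ u then -1 else 0 : R)%R = (l%:R - 2 * m%:R + u%:R)%R.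
Proof. by case: l m u => [] [] [] //= _ _; ring. Qed.

Section SecondDifferences.
Local Open Scope ring_scope.
Context {R : comNzRingType} {T : Type} {D : T -> Prop} {S : (T -> R) -> Prop}.
Hypothesis S0 : S (fun _ => 0).
Hypothesis S_lin : forall a b f g, S f -> S g -> S (fun x => a * f x + b * g x).
Hypothesis S_ext : forall f g, (forall x, D x -> f x = g x) -> S f -> S g.
Context {N : nat} {X : nat -> T -> R}.
Hypothesis second_diff :
  forall m, (0 < m <= N)%N -> S (fun x => X m.-1 x - 2 * X m x + X m.+1 x).

Lemma second_diff_affine m :
  (m <= N.+1)%N -> S (fun x => X m x - X 0 x - m%:R * (X 1 x - X 0 x)).
Proof.
elim: m {-2}m (leqnn m) => [|M IHM] [|[|m]] // hm hmN.
- by apply: S_ext S0 => x _; rewrite mul0r; ring.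
- by apply: S_ext S0 => x _; rewrite mul0r; ring.
- by apply: S_ext S0 => x _; rewrite mul1r; ring.
have Sm1 := IHM m.+1 ltac:(lia) ltac:(lia).
have Sm := IHM m ltac:(lia) ltac:(lia).
have Sm2 := S_lin 1 2 _ _ (second_diff m.+1 ltac:(lia)) Sm1.
apply: S_ext (S_lin 1 (-1) _ _ Sm2 Sm) => x _ /=.
rewrite -[m.+2]addn2 -[m.+1]addn1 !natrD; ring.
Qed.

Lemma second_diff_lin_rel j k : (j <= N.+1)%N -> (k <= N.+1)%N ->
  S (fun x => k%:R * X j x - j%:R * X k x - (k%:R - j%:R) * X 0 x).
Proof.
move=> hj hk.
apply: S_ext (S_lin k%:R (- j%:R) _ _ (second_diff_affine j hj) (second_diff_affine k hk)).
by move=> x _; ring.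
Qed.

End SecondDifferences.

Section Fence.
Variable alpha : seq nat.
Local Notation t := (ft alpha).
Local Notation n := (fn alpha).
Local Notation fa := (fa alpha).
Local Notation pos := (@pos alpha).
Local Notation sp := (seg_parity alpha).
Local Notation fcover := (fcover alpha).
Local Notation fle := (fle alpha).
Local Notation flt := (flt alpha).

Hypothesis t_ge2 : 1 < t.
Hypothesis alpha_gt0 : all (fun x => 0 < x) alpha.
Hypothesis head_alpha : 1 < head 0 alpha.
Hypothesis last_alpha : 1 < last 0 alpha.

Lemma fa0 : fa 0 = 0.
Proof. by rewrite /Defs.fa take0. Qed.

Lemma fa1 : fa 1 = head 0 alpha.
Proof. by rewrite /Defs.fa; case: alpha => //= x s; rewrite take0 addn0. Qed.

Lemma faS m : m < t -> fa m.+1 = fa m + nth 0 alpha m.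
Proof.
by move=> mt; rewrite /Defs.fa -addn1 takeD sumn_cat (drop_nth 0 mt) /= take0 /= addn0.
Qed.

Lemma leq_fa m m' : m <= m' -> fa m <= fa m'.
Proof. by move=> le; rewrite /Defs.fa -(subnKC le) takeD sumn_cat leq_addr. Qed.

Lemma ltn_faS m : m < t -> fa m < fa m.+1.
Proof. by move=> mt; rewrite faS // -[X in X < _]addn0 ltn_add2l (all_nthP 0 alpha_gt0). Qed.

Lemma falpha_last : falpha alpha t = last 0 alpha.
Proof. by rewrite /falpha /ft nth_last. Qed.

Lemma fa_last : fa t = fa t.-1 + last 0 alpha.
Proof.
by rewrite -{1}(prednK (ltnW t_ge2)) faS ?prednK ?(ltnW t_ge2) // /ft nth_last.
Qed.

Lemma fn_S : n.+1 = fa t.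
Proof. by rewrite /fn fa_last; lia. Qed.

Lemma fa_bounds : (1 < fa 1 <= fa t.-1) && (fa t.-1 < n).
Proof. by have := leq_fa 1 t.-1 ltac:(lia); have := fa1; have := fn_S; rewrite fa_last; lia. Qed.

Lemma fa_between m : 0 < m < t -> fa 1 <= fa m <= fa t.-1.
Proof. by move=> hm; rewrite !leq_fa //; lia. Qed.

(* All edges r in [lo, hi), joining x_r to x_{r+1}, go up if b and down
   otherwise; edges 0 and n join the fence to virtual elements x_0 and x_{n+1}. *)
Definition run (b : bool) (lo hi : nat) :=
  forall r c, lo <= r < hi -> sp r c = (b == c).

Lemma run_segment i : 0 < i <= t -> run (odd i) (fa i.-1) (fa i).
Proof.
move=> hi r c hr; apply/hasP/eqP => [[i']|<-]; last by exists i; rewrite ?mem_iota ?hr //; lia.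
rewrite mem_iota => hi' /andP[hr' /eqP <-]; congr odd.
case: (ltngtP i' i) => [lt|gt|//].
  have : fa i' <= fa i.-1 by apply: leq_fa; lia.
  lia.
have : fa i <= fa i'.-1 by apply: leq_fa; lia.
lia.
Qed.

Lemma run_last : run (odd t) (fa t.-1) n.+1.
Proof. by rewrite fn_S; apply: run_segment; lia. Qed.

Lemma pos_gt0 y : 0 < pos y.
Proof. by []. Qed.

Lemma pos_le y : pos y <= n.
Proof. exact: ltn_ord. Qed.

Lemma pos_inj : injective pos.
Proof. by move=> y z [] /val_inj. Qed.

Lemma posP p : 0 < p <= n -> {y : 'I_n | pos y = p}.
Proof. by case: p => // p /= pn; exists (Ordinal pn). Qed.

Lemma card_pos_between lo hi : hi <= n.+1 -> #|[set y | lo < pos y < hi]| = (hi - lo).-1.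
Proof.
elim: hi => [|hi IHhi] hhi.
  by apply/eqP; rewrite cards_eq0; apply/eqP/setP => y; rewrite !inE ltn0 andbF.
have [lohi|hilo] := ltnP lo hi.
  have [z zhi] := posP hi ltac:(lia).
  have -> : [set y | lo < pos y < hi.+1] = z |: [set y | lo < pos y < hi].
    by apply/setP => y; rewrite !inE -(inj_eq pos_inj) zhi; apply/idP/idP; lia.
  by rewrite cardsU1 IHhi ?inE ?zhi ?ltnn ?andbF //; lia.
have -> : [set y | lo < pos y < hi.+1] = [set y | lo < pos y < hi].
  by apply/setP => y; rewrite !inE; apply/idP/idP; lia.
by rewrite IHhi //; lia.
Qed.

Lemma fle_up x y : ~~ sp (pos x).-1 false -> fle x y -> pos x <= pos y.
Proof.
move=> hx xy; apply: (connect_invariant (fun u => pos x <= pos u) xy) => // u v.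
case/orP=> /andP[/eqP uv h] xu; first lia.
have [//|vx] := leqP (pos x) (pos v).
have vx' : pos v = (pos x).-1 by lia.
by rewrite vx' (negbTE hx) in h.
Qed.

Lemma fle_down x y : ~~ sp (pos x) true -> fle x y -> pos y <= pos x.
Proof.
move=> hx xy; apply: (connect_invariant (fun u => pos u <= pos x) xy) => // u v.
case/orP=> /andP[/eqP uv h] ux; last lia.
have [xu|] := leqP (pos x) (pos u); last lia.
have ux' : pos u = pos x by lia.
by rewrite ux' (negbTE hx) in h.
Qed.

Lemma run_fle {b lo hi} x y : run b lo hi -> lo <= pos x -> pos x <= pos y <= hi ->
  if b then fle x y else fle y x.
Proof.
move=> hrun hlo /andP[/subnKC]; move: (_ - _) => d.
elim: d y => [|d IHd] y yd yhi.
  have -> : y = x by apply: pos_inj; lia.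
  by case: b {hrun}; apply: connect0.
have [z zd] := posP (pos x + d) ltac:(have := pos_le y; have := pos_gt0 x; lia).
have edge c : sp (pos z) c = (b == c) by apply: hrun; lia.
have yz : pos y = (pos z).+1 by lia.
have := IHd z (esym zd) ltac:(lia); case: b {hrun IHd} edge => edge zx.
  by apply: connect_trans zx (connect1 _); rewrite /Defs.fcover yz edge !eqxx.
by apply: connect_trans (connect1 _) zx; rewrite /Defs.fcover yz edge !eqxx orbT.
Qed.

Lemma run_flt {b lo hi} x y : run b lo hi -> lo < pos x < hi -> lo < pos y < hi ->
  flt x y = (if b then pos x < pos y else pos y < pos x).
Proof.
move=> hrun hx hy; rewrite /Defs.flt -(inj_eq pos_inj).
case: b hrun => hrun; apply/andP/idP => [[nxy xy]|lt].
- by have := fle_up x y ltac:(rewrite hrun //; lia) xy; lia.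
- by split; [lia | apply: (run_fle _ _ hrun); lia].
- by have := fle_down x y ltac:(rewrite hrun //; lia) xy; lia.
- by split; [lia | apply: (run_fle _ _ hrun); lia].
Qed.

Lemma is_sharedP x : reflect (exists2 m, 0 < m < t & pos x = fa m) (is_shared alpha x).
Proof.
apply: (iffP hasP) => [[m]|[m hm xm]]; rewrite ?mem_iota.
  by move=> hm /eqP xm; exists m => //; lia.
by exists m; rewrite ?mem_iota ?xm //; lia.
Qed.

Lemma breveS_first : breveS alpha 1 = [set x | 0 < pos x < fa 1].
Proof.
apply/setP => x; rewrite !inE /=; case: is_sharedP => [[m hm ->]|ns] /=.
  by have := fa_between m hm; lia.
have [e|ne] := eqVneq (pos x) (fa 1); first by case: ns; exists 1 => //; lia.
by rewrite ltn_neqAle ne.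
Qed.

Lemma breveS_last : breveS alpha t = [set x | fa t.-1 < pos x < n.+1].
Proof.
apply/setP => x; rewrite !inE (_ : (t == 1) = false) ?eqxx; last by apply/eqP; lia.
case: is_sharedP => [[m hm ->]|ns] /=.
  by have := fa_between m hm; lia.
have [e|ne] := eqVneq (pos x) (fa t.-1); first by case: ns; exists t.-1 => //; lia.
by rewrite ltnS pos_le andbT ltn_neqAle eq_sym ne.
Qed.

Lemma card_neighbours p :
  1 < p < n -> #|[set y | (p == (pos y).+1) || (pos y == p.+1)]| = 2.
Proof.
move=> hp; have [y1 y1p] := posP p.-1 ltac:(lia); have [y2 y2p] := posP p.+1 ltac:(lia).
have -> : [set y | (p == (pos y).+1) || (pos y == p.+1)] = [set y1; y2].
  by apply/setP => y; rewrite !inE -!(inj_eq pos_inj) y1p y2p; apply/idP/idP; lia.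
by rewrite cards2 -(inj_eq pos_inj) y1p y2p; apply/eqP; lia.
Qed.

Lemma shared_peak_valley m x : 0 < m < t -> pos x = fa m ->
  if odd m then is_peak alpha x else is_valley alpha x.
Proof.
move=> hm xm; have := fa_between m hm; have := fa_bounds => bounds between.
have lt_pred : fa m.-1 < fa m by have := ltn_faS m.-1 ltac:(lia); rewrite prednK //; lia.
have lt_succ := ltn_faS m ltac:(lia).
have before := run_segment m ltac:(lia); have after := run_segment m.+1 ltac:(lia).
have shared : is_shared alpha x by apply/is_sharedP; exists m.
rewrite /is_peak /is_valley shared -(card_neighbours (pos x)); last lia.
case: ifP => om; apply/eqP/eq_card => y.
all: rewrite !inE /Defs.fcover (after (pos x)) /= ?om ?andbT; try lia.
all: case: (eqVneq (pos x) (pos y).+1) => [xy|_]; rewrite /= ?orbF //.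
all: by rewrite (before (pos y)) ?om //; lia.
Qed.

Lemma shared_in_segment m i x : 0 < m < t -> m <= i <= m.+1 -> pos x = fa m ->
  x \in segment alpha i.
Proof.
move=> hm + xm; rewrite inE xm; case: ifP => [/eqP->|_]; last case: ifP => [/eqP->|_].
all: by move=> hi; rewrite ?leq_fa //; lia.
Qed.

Lemma segment_peak_valley m i : 0 < m < t -> m <= i <= m.+1 ->
  if odd m then has_peak alpha i else has_valley alpha i.
Proof.
move=> hm hi; have := fa_between m hm; have := fa_bounds => bounds between.
have [x xm] := posP (fa m) ltac:(lia).
have := shared_peak_valley _ _ hm xm; have := shared_in_segment _ _ _ hm hi xm.
by case: ifP => _ xi pv; apply/existsP; exists x; rewrite xi.
Qed.

Lemma first_segment_has_peak : has_peak alpha 1.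
Proof. by have := segment_peak_valley 1 1; apply; lia. Qed.

Lemma last_segment_peak_valley : if odd t then has_valley alpha t else has_peak alpha t.
Proof.
have := segment_peak_valley t.-1 t ltac:(lia) ltac:(lia).
by rewrite -[in odd t](prednK (ltnW t_ge2)) /=; case: (odd t.-1).
Qed.

Lemma interior_segment_peak_valley i :
  1 < i < t -> has_peak alpha i && has_valley alpha i.
Proof.
move=> hi; have := segment_peak_valley i.-1 i ltac:(lia) ltac:(lia).
have := segment_peak_valley i i ltac:(lia) ltac:(lia).
rewrite -[in odd i](@prednK i) /=; last lia.
by case: (odd i.-1) => /= -> ->.
Qed.

Local Open Scope ring_scope.

Lemma hchi_run {i b lo hi l} y I : run b lo hi -> (hi <= n.+1)%N ->
  breveS alpha i = [set x | (lo < pos x < hi)%N] -> (0 < l < hi - lo)%N ->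
  pos y = (if b then lo + l else hi - l)%N ->
  hchi alpha i l I = (y \in I)%:R.
Proof.
move=> hrun hhi hB hl hy.
have rank z : z \in breveS alpha i ->
    #|[set x in breveS alpha i | flt x z]| = ((if b then pos z - lo else hi - pos z).-1)%N.
  move=> zB; have hz : (lo < pos z < hi)%N by move: zB; rewrite hB inE.
  have -> : [set x in breveS alpha i | flt x z] =
      [set x | ((if b then lo else pos z) < pos x < (if b then pos z else hi))%N].
    apply/setP => x; rewrite hB !inE.
    have [hx|hx] := boolP (lo < pos x < hi)%N.
      by rewrite (run_flt _ _ hrun hx hz); case: b {hrun hy}; apply/idP/idP; lia.
    by case: b {hrun hy}; apply/esym/negbTE; lia.
  by rewrite card_pos_between; case: b {hrun hy}; lia.
rewrite /hchi; case: pickP => [q /andP[qB /eqP]|none].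
  rewrite rank // => ql; have := qB; rewrite hB inE => hq.
  have -> : q = y by apply: pos_inj; rewrite hy; case: b {hrun rank hy} ql; lia.
  by case: (y \in I).
have yB : y \in breveS alpha i by rewrite hB inE hy; case: b {hrun rank hy}; lia.
move/negbT: (none y); rewrite yB rank // => /eqP[]; rewrite hy.
by case: b {hrun rank hy}; lia.
Qed.

Lemma toggle_covers q I : is_ideal alpha I ->
  toggle alpha q I = [forall y, fcover y q ==> (y \in I)]%:R - 2 * (q \in I)%:R
                     + [exists y, fcover q y && (y \in I)]%:R.
Proof.
move=> hI.
have down x y : fle x y -> y \in I -> x \in I.
  by move=> xy yI; move/forallP: hI => /(_ x)/forallP/(_ y); rewrite xy yI.
have cover_flt x y : fcover x y -> flt x y.
  move=> xy; rewrite /Defs.flt /Defs.fle (connect1 xy) andbT -(inj_eq pos_inj).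
  by move: xy; rewrite /Defs.fcover; apply: contraTneq => ->; rewrite ltn_eqF.
have lowerE : [forall y, flt y q ==> (y \in I)] = [forall y, fcover y q ==> (y \in I)].
  apply/forallP/forallP => H y; apply/implyP => yq.
    by move/implyP: (H y); apply; apply: cover_flt.
  case/andP: yq => nyq /(connect_last_step nyq)[z yz zq].
  by apply: down yz _; move/implyP: (H z); apply.
have upperE : [forall y, flt q y ==> (y \notin I)] = ~~ [exists y, fcover q y && (y \in I)].
  rewrite negb_exists; apply/forallP/forallP => H y.
    rewrite negb_and; case: (boolP (fcover q y)) => //= qy.
    by move/implyP: (H y); apply; apply: cover_flt.
  apply/implyP => /andP[nqy /(connect_first_step nqy)[z qz zy]]; apply/negP => yI.
  by have := H z; rewrite qz (down _ _ zy yI).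
rewrite /toggle /in_min_compl /in_max lowerE upperE toggle_bool //.
  by apply/implyP => qI; apply/forallP => y; apply/implyP => yq; apply: down (connect1 yq) qI.
by apply/implyP => /existsP[y /andP[qy yI]]; apply: down (connect1 qy) yI.
Qed.

(* x_p \in I, where a virtual position p \notin [1, n] gets the default d:
   true when the virtual element lies below its neighbour, false when above. *)
Definition xin (d : bool) (I : {set 'I_n}) (p : nat) : bool :=
  if (0 < p <= n)%N then [exists y, (pos y == p) && (y \in I)] else d.

Lemma xin_pos d I y : xin d I (pos y) = (y \in I).
Proof.
rewrite /xin pos_gt0 pos_le; apply/existsP/idP => [[z /andP[/eqP/pos_inj-> //]]|yI].
by exists y; rewrite eqxx.
Qed.

Lemma xin_inner d d' I p : (0 < p <= n)%N -> xin d I p = xin d' I p.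
Proof. by rewrite /xin => ->. Qed.

Lemma xin_outside d I p : ~~ (0 < p <= n)%N -> xin d I p = d.
Proof. by rewrite /xin => /negbTE->. Qed.

Lemma forall_pos_xin {P : pred 'I_n} {I : {set 'I_n}} {p} :
  (forall y, P y = (pos y == p)) -> [forall y, P y ==> (y \in I)] = xin true I p.
Proof.
move=> HP; rewrite /xin; case: ifP => hp.
  apply/forallP/existsP => [H|[z /andP[/eqP zp zI]] y].
    by have [y yp] := posP p hp; exists y; rewrite yp eqxx /=; have := H y; rewrite HP yp eqxx.
  by rewrite HP; apply/implyP => /eqP; rewrite -zp => /pos_inj->.
by apply/forallP => y; rewrite HP; apply/implyP => /eqP yp; move: hp; rewrite -yp pos_gt0 pos_le.
Qed.

Lemma exists_pos_xin {P : pred 'I_n} {I : {set 'I_n}} {p} :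
  (forall y, P y = (pos y == p)) -> [exists y, P y && (y \in I)] = xin false I p.
Proof.
move=> HP; rewrite /xin; case: ifP => hp; first by apply: eq_existsb => y; rewrite HP.
by apply/existsP => -[y /andP[]]; rewrite HP => /eqP yp; move: hp; rewrite -yp pos_gt0 pos_le.
Qed.

Lemma run_lower_cover {b lo hi q} y : run b lo hi -> (lo < pos q < hi)%N ->
  fcover y q = (pos y == if b then (pos q).-1 else (pos q).+1).
Proof.
move=> hrun hq; have e1 := hrun (pos q).-1; have e2 := hrun (pos q).
rewrite /Defs.fcover; case: b {hrun} e1 e2 => e1 e2.
  rewrite (e2 false ltac:(lia) : _ = false) andbF orbF.
  apply/andP/eqP => [[/eqP qy _]|yq]; first lia.
  by rewrite yq (e1 true ltac:(lia) : _ = true) prednK ?eqxx.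
rewrite (e2 false ltac:(lia) : _ = true) andbT.
apply/orP/eqP => [[/andP[/eqP qy]|/eqP //]|->]; last by right.
have yq : pos y = (pos q).-1 by lia.
by rewrite yq (e1 true ltac:(lia) : _ = false).
Qed.

Lemma run_upper_cover {b lo hi q} y : run b lo hi -> (lo < pos q < hi)%N ->
  fcover q y = (pos y == if b then (pos q).+1 else (pos q).-1).
Proof.
move=> hrun hq; have e1 := hrun (pos q).-1; have e2 := hrun (pos q).
rewrite /Defs.fcover; case: b {hrun} e1 e2 => e1 e2.
  rewrite (e2 true ltac:(lia) : _ = true) andbT.
  apply/orP/eqP => [[/eqP //|/andP[/eqP qy]]|->]; last by left.
  have yq : pos y = (pos q).-1 by lia.
  by rewrite yq (e1 false ltac:(lia) : _ = false).
rewrite (e2 true ltac:(lia) : _ = false) andbF orFb.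
apply/andP/eqP => [[/eqP qy _]|yq]; first lia.
by rewrite yq (e1 false ltac:(lia) : _ = true) prednK ?eqxx.
Qed.

Lemma toggle_run {b lo hi} q I : run b lo hi -> (lo < pos q < hi)%N -> is_ideal alpha I ->
  toggle alpha q I
  = (xin b I (pos q).-1)%:R - 2 * (q \in I)%:R + (xin (~~ b) I (pos q).+1)%:R.
Proof.
move=> hrun hq hI; rewrite toggle_covers //.
rewrite (forall_pos_xin (fun y => run_lower_cover y hrun hq)).
rewrite (exists_pos_xin (fun y => run_upper_cover y hrun hq)).
by case: b {hrun} => /=; ring.
Qed.

Definition toggle_span (f : {set 'I_n} -> R) : Prop :=
  exists c : 'I_n -> R, forall I, is_ideal alpha I -> f I = \sum_q c q * toggle alpha q I.

Lemma toggle_span_ext f g :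
  (forall I, is_ideal alpha I -> f I = g I) -> toggle_span f -> toggle_span g.
Proof. by move=> fg [c Hc]; exists c => I hI; rewrite -fg // Hc. Qed.

Lemma toggle_span_lin a b f g :
  toggle_span f -> toggle_span g -> toggle_span (fun I => a * f I + b * g I).
Proof.
move=> [c Hc] [c' Hc']; exists (fun q => a * c q + b * c' q) => I hI.
rewrite Hc // Hc' // !mulr_sumr -big_split /=; apply: eq_bigr => q _; ring.
Qed.

Lemma toggle_span0 : toggle_span (fun _ => 0).
Proof. by exists (fun _ => 0) => I _; rewrite big1 // => q _; rewrite mul0r. Qed.

Lemma toggle_span_toggle q : toggle_span (toggle alpha q).
Proof.
exists (fun q' => (q' == q)%:R) => I _.
by rewrite (bigD1 q) //= eqxx mul1r big1 ?addr0 // => q' /negbTE->; rewrite mul0r.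
Qed.

Lemma toggle_span_second_diff {b lo hi} d p : run b lo hi -> (hi <= n.+1)%N ->
  (lo = 0 -> d = b) -> (hi = n.+1 -> d = ~~ b) -> (lo < p < hi)%N ->
  toggle_span (fun I => (xin d I p.-1)%:R - 2 * (xin d I p)%:R + (xin d I p.+1)%:R).
Proof.
move=> hrun hhi dlo dhi hp; have [q qp] := posP p ltac:(lia).
apply: toggle_span_ext (toggle_span_toggle q) => I hI.
have lowE : xin b I p.-1 = xin d I p.-1.
  by have [p1|p1] := ltnP 1 p; [apply: xin_inner; lia | rewrite dlo //; lia].
have highE : xin (~~ b) I p.+1 = xin d I p.+1.
  by have [pn|pn] := ltnP p n; [apply: xin_inner; lia | rewrite dhi //; lia].
by rewrite (toggle_run q I hrun) ?qp // -(xin_pos d I q) qp lowE highE.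
Qed.

Lemma first_segment_rel j k :
  (0 < j <= fbeta alpha 1)%N -> (0 < k <= fbeta alpha 1)%N ->
  tequiv alpha (fun I => k%:R * hchi alpha 1 j I - j%:R * hchi alpha 1 k I)
               (fun _ => k%:R - j%:R).
Proof.
have fb : fbeta alpha 1 = (fa 1).-1 by rewrite /fbeta /falpha fa1; case: alpha.
have hrun : run true 0 (fa 1) by move: (run_segment 1 ltac:(lia)); rewrite /= fa0.
rewrite fb => hj hk; have := fa_bounds => bounds.
pose X m I := (xin true I m)%:R : R.
have second_diff m : (0 < m <= (fa 1).-1)%N ->
    toggle_span (fun I => X m.-1 I - 2 * X m I + X m.+1 I).
  by move=> hm; apply: (toggle_span_second_diff true m hrun) => //; lia.
have hchiX l I : (0 < l <= (fa 1).-1)%N -> hchi alpha 1 l I = X l I.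
  move=> hl; have [y yl] := posP l ltac:(lia).
  by rewrite (hchi_run y I hrun _ breveS_first) ?yl /X -?yl ?xin_pos //; lia.
apply: toggle_span_ext (second_diff_lin_rel toggle_span0 toggle_span_lin toggle_span_ext
  (X := X) second_diff j k ltac:(lia) ltac:(lia)) => I _.
by rewrite !hchiX // /X (xin_outside _ I 0) //=; ring.
Qed.

(* The last segment read from the virtual element x_{n+1}, which lies below x_n
   exactly when t is even. *)
Definition chi_from_end (m : nat) (I : {set 'I_n}) : R :=
  (xin (~~ odd t) I (n.+1 - m))%:R.

Lemma fbeta_last : fbeta alpha t = (n - fa t.-1)%N.
Proof. by rewrite /fbeta falpha_last; have := fn_S; rewrite fa_last; lia. Qed.

Lemma second_diff_from_end m : (0 < m <= fbeta alpha t)%N ->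
  toggle_span (fun I => chi_from_end m.-1 I - 2 * chi_from_end m I + chi_from_end m.+1 I).
Proof.
rewrite fbeta_last => hm; have := fa_bounds => bounds.
have span := toggle_span_second_diff (~~ odd t) (n.+1 - m) run_last (leqnn _)
  ltac:(move=> ?; lia) (fun _ => erefl) ltac:(lia).
apply: toggle_span_ext span => I _; rewrite /chi_from_end.
have -> : (n.+1 - m.-1 = (n.+1 - m).+1)%N by lia.
have -> : (n.+1 - m.+1 = (n.+1 - m).-1)%N by lia.
ring.
Qed.

Lemma hchi_last l I : (0 < l <= fbeta alpha t)%N ->
  hchi alpha t l I = chi_from_end (if odd t then (fbeta alpha t).+1 - l else l)%N I.
Proof.
rewrite fbeta_last => hl; have := fa_bounds => bounds.
have [y yl] := posP (if odd t then fa t.-1 + l else n.+1 - l)%N ltac:(case: odd; lia).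
rewrite (hchi_run y I run_last (leqnn _) breveS_last) //; last lia.
rewrite /chi_from_end; have -> : (n.+1 - (if odd t then (n - fa t.-1).+1 - l else l) = pos y)%N.
  by rewrite yl; case: odd; lia.
by rewrite xin_pos.
Qed.

Lemma last_segment_rel_even j k : ~~ odd t ->
  (0 < j <= fbeta alpha t)%N -> (0 < k <= fbeta alpha t)%N ->
  tequiv alpha (fun I => k%:R * hchi alpha t j I - j%:R * hchi alpha t k I)
               (fun _ => k%:R - j%:R).
Proof.
move=> /negbTE even_t hj hk.
apply: toggle_span_ext (second_diff_lin_rel toggle_span0 toggle_span_lin toggle_span_ext
  (X := chi_from_end) second_diff_from_end j k ltac:(lia) ltac:(lia)) => I _.
rewrite !hchi_last // even_t /chi_from_end even_t subn0 (xin_outside _ I n.+1) /=; last lia.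
ring.
Qed.

Lemma last_segment_rel_odd j k : odd t ->
  (0 < j <= fbeta alpha t)%N -> (0 < k <= fbeta alpha t)%N ->
  tequiv alpha (fun I => ((falpha alpha t)%:R - k%:R) * hchi alpha t j I
                         - ((falpha alpha t)%:R - j%:R) * hchi alpha t k I) (fun _ => 0).
Proof.
move=> odd_t hj hk; set N := fbeta alpha t.
have alphaE : falpha alpha t = N.+1 by rewrite /N /fbeta falpha_last; lia.
apply: toggle_span_ext (second_diff_lin_rel toggle_span0 toggle_span_lin toggle_span_ext
  (X := chi_from_end) second_diff_from_end (N.+1 - j) (N.+1 - k) ltac:(lia) ltac:(lia)).
move=> I _; rewrite !hchi_last // odd_t alphaE /chi_from_end odd_t subn0.
by rewrite (xin_outside _ I n.+1) /= ?natrB; [ring | lia | lia | lia].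
Qed.

End Fence.

Local Open Scope ring_scope.

Theorem corollary4p2 (alpha : seq nat) :
  (2 <= size alpha)%N -> all (fun x => 0 < x)%N alpha ->
  (2 <= head 0 alpha)%N -> (2 <= last 0 alpha)%N ->
  forall i j k : nat,
    (1 <= i <= ft alpha)%N ->
    (1 <= j <= fbeta alpha i)%N -> (1 <= k <= fbeta alpha i)%N ->
    (~~ has_valley alpha i ->
       tequiv alpha (fun I => k%:R * hchi alpha i j I - j%:R * hchi alpha i k I)
              (fun _ => k%:R - j%:R))
    /\
    (~~ has_peak alpha i ->
       tequiv alpha (fun I => ((falpha alpha i)%:R - k%:R) * hchi alpha i j I
                        - ((falpha alpha i)%:R - j%:R) * hchi alpha i k I)
              (fun _ => 0)).
Proof.
move=> t_ge2 alpha_gt0 head_alpha last_alpha i j k hi hj hk.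
have [i1 | i_ne1] := eqVneq i 1%N.
  subst i; split=> [_ | /negP[]]; first by apply: first_segment_rel.
  by apply: first_segment_has_peak.
have [it | i_ne_t] := eqVneq i (ft alpha).
  subst i; have := last_segment_peak_valley alpha t_ge2 alpha_gt0 head_alpha last_alpha.
  case: ifP => parity pv.
    by split=> [/negP[] // | _]; apply: last_segment_rel_odd.
  by split=> [_ | /negP[] //]; apply: last_segment_rel_even; rewrite ?parity.
have /andP[peak valley] : has_peak alpha i && has_valley alpha i.
  by apply: interior_segment_peak_valley => //; lia.
by split=> /negP.
Qed.
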